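(* Assume a capacity is given as in the context, satisfying: whenever $f=0$ $m$-a.e. and $t>0$, $p_tf=0$ except on a set of capacity $0$. Then every $m$-thin set has capacity $0$.
   Context: $(E,\mathcal B(E),m)$ is a $\sigma$-finite measure space. $p_t(x,\cdot)$, $t\ge0$, is a transition probability function on $E$ (probability measures, jointly measurable in $(t,x)$, $p_0(x,A)=1_A(x)$, with the semigroup property $p_{s+t}=p_sp_t$); $p_tf(x)=\int f\,dp_t(x,\cdot)$. $(T_t)$ is a strongly continuous semigroup on $L_2(m)$ with $p_tf$ representing $T_tf$ for bounded measurable square-integrable $f$. $Rf(x)=\int_0^\infty e^{-t}p_tf(x)\,dt$. A set $N\in\mathcal B(E)$ is $m$-thin if there exists $B\in\mathcal B(E)$ with $m(B)=0$ and $N\subset\{x:R1_B(x)>0\}$. A capacity here is a monotone set function on $\mathcal B(E)$ (e.g. that of the potential theory of the associated Markov process) such that a countable union of sets of capacity $0$ has capacity $0$. *)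

From HB Require Import structures.
From mathcomp Require Import all_boot all_order all_algebra.
From mathcomp Require Import all_classical all_reals all_analysis.
From mathcomp Require Import measurable_realfun.
Set Implicit Arguments. Unset Strict Implicit. Unset Printing Implicit Defensive.
Import Order.TTheory GRing.Theory Num.Theory.
Import numFieldNormedType.Exports.
Local Open Scope classical_set_scope.
Local Open Scope ring_scope.

Section markov_defs.
Context {d : measure_display} {E : measurableType d} {R : realType}.

Definition ptf (p : R -> E -> probability E R) (t : R) (f : E -> R) (x : E)
  : \bar R := (\int[p t x]_y (f y)%:E)%E.

Definition transition_function (p : R -> E -> probability E R) : Prop :=
  [/\
      (forall A : set E, measurable A ->
         measurable_fun [set tx : R * E | 0 <= tx.1]
           (fun tx : (R * E)%type => (p tx.1 tx.2 A : \bar R))),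
      (forall (x : E) (A : set E), measurable A ->
         p 0 x A = (\1_A x)%:E) &
      (forall (s t : R) (x : E) (A : set E), 0 <= s -> 0 <= t -> measurable A ->
         p (s + t) x A = (\int[p s x]_y p t y A)%E)].

Definition L2 (m : {measure set E -> \bar R}) (f : E -> R) : Prop :=
  f \in Lfun m 2%:E.

Definition L2norm (m : {measure set E -> \bar R}) (f : E -> R) : R :=
  fine ('N[m]_2%:E[EFin \o f])%E.

(* (T_t)_{t >= 0} is a strongly continuous semigroup of bounded linear operators
   on L2(m); operators are given on representatives and are required to respect
   m-a.e. equality, so that they act on L2(m)-classes. *)
Definition L2_sc_semigroup (m : {measure set E -> \bar R})
    (T : R -> (E -> R) -> E -> R) : Prop :=
  [/\ (forall t f, 0 <= t -> L2 m f -> L2 m (T t f)) /\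
      (forall t f g, 0 <= t -> L2 m f -> L2 m g -> f = g %[ae m] ->
         T t f = T t g %[ae m]),
      (forall t (a : R) f g, 0 <= t -> L2 m f -> L2 m g ->
         T t (fun x => a * f x + g x) = (fun x => a * T t f x + T t g x) %[ae m]),
      (forall t, 0 <= t -> exists C : R, forall f, L2 m f ->
         L2norm m (T t f) <= C * L2norm m f),
      (forall f, L2 m f -> T 0 f = f %[ae m]) /\
      (forall s t f, 0 <= s -> 0 <= t -> L2 m f ->
         T (s + t) f = T s (T t f) %[ae m]) &
      (forall f, L2 m f ->
         L2norm m (fun x => T t f x - f x) @[t --> 0^'+] --> 0)].

Definition represents (m : {measure set E -> \bar R})
    (p : R -> E -> probability E R) (T : R -> (E -> R) -> E -> R) : Prop :=
  forall t (f : E -> R), 0 <= t -> measurable_fun setT f ->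
    (exists M : R, forall x, `|f x| <= M) -> L2 m f ->
    ptf p t f = EFin \o T t f %[ae m].

Definition resolvent (p : R -> E -> probability E R) (f : E -> R) (x : E)
  : \bar R :=
  (\int[lebesgue_measure]_(t in `[0%R, +oo[%classic)
      ((expR (- t))%:E * ptf p t f x))%E.

Definition m_thin (m : {measure set E -> \bar R})
    (p : R -> E -> probability E R) (N : set E) : Prop :=
  exists B : set E, [/\ measurable B, m B = 0%E &
    N `<=` [set x | (0 < resolvent p (\1_B) x)%E]].

Definition capacity (Cap : set E -> \bar R) : Prop :=
  [/\ (forall A, measurable A -> (0 <= Cap A)%E),
      (forall A B, measurable A -> measurable B -> A `<=` B ->
         (Cap A <= Cap B)%E) &
      (forall F : (set E)^nat, (forall n, measurable (F n)) ->
         (forall n, Cap (F n) = 0%E) -> Cap (\bigcup_n F n) = 0%E)].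

End markov_defs.

From HB Require Import structures.
From mathcomp Require Import all_boot all_order all_algebra.
From mathcomp Require Import all_classical all_reals all_analysis.
From mathcomp Require Import measurable_realfun.
Import Order.TTheory GRing.Theory Num.Theory.
Import numFieldNormedType.Exports.
Set Implicit Arguments. Unset Strict Implicit. Unset Printing Implicit Defensive.
Local Open Scope classical_set_scope.
Local Open Scope ring_scope.

(* Let [N] be [m]-thin through the [m]-null set [B], and let [u y] be the total
   time spent in [B], [u y = \int_0^oo p_s(y, B) ds].  Since [p_s 1_B] represents
   [T_s 1_B = 0] in L2(m), Fubini gives [u = 0] m-a.e., hence also
   [min(u, 1) = 0] m-a.e.  By hypothesis [p_q min(u, 1)] vanishes off a set [Z_q] of
   capacity 0.  Off [Z_q], [u = 0] p_q(x, .)-a.e., so by Chapman-Kolmogorov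
   [0 = p_q u x = \int_q^oo p_t(x, B) dt].  Off the union of the [Z_(1/(n+1))],
   [p_t(x, B) = 0] for a.e. [t > 0], i.e. [R 1_B x = 0]; so this union, of
   capacity 0, covers [N]. *)

(* Lebesgue measure lives on the sigma-algebra generated by intervals, not on the
   canonical measurable type of [R], so [\forall t \ae lebesgue_measure, P t]
   with [t : R] does not find its [Filter] instance; it is restated at type [R]. *)
#[local] Instance lebesgue_ae_filter (R : realType) :
  @Filter R (almost_everywhere (@lebesgue_measure R)) :=
  ae_filter_ringOfSetsType (@lebesgue_measure R).

Section integral_ae.
Local Open Scope ereal_scope.
Context d (T : measurableType d) (R : realType) (mu : {measure set T -> \bar R}).

Lemma ge0_integral_eq0_ae (f : T -> \bar R) :
  measurable_fun setT f -> (forall x, 0 <= f x) ->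
  \int[mu]_x f x = 0 -> f = cst 0 %[ae mu].
Proof.
move=> mf f0 intf0; apply/(ae_eq_integral_abs _ measurableT mf).
by rewrite -[RHS]intf0; apply: eq_integral => x _; rewrite gee0_abs.
Qed.

Lemma Lfun_indic_null (B : set T) (r : R) :
  r != 0%R -> measurable B -> mu B = 0 -> (\1_B : T -> R) \in Lfun mu r%:E.
Proof.
move=> r0 mB muB0; rewrite inE; apply/andP; split.
  by rewrite inE /=; exact: measurable_indic.
rewrite inE /= /finite_norm unlock /Lnorm.
rewrite (eq_integral (fun x => (\1_B x)%:E)); last first.
  move=> x _; rewrite /= indicE.
  by case: (x \in B); rewrite ?normr1 ?powR1 ?normr0 ?powR0.
by rewrite integral_indic// setIT muB0 poweR0r ?ltry// invr_neq0.
Qed.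

End integral_ae.

Lemma capacity_sub_bigcup0 d (E : measurableType d) (R : realType)
    (Cap : set E -> \bar R) (Z : (set E)^nat) (N : set E) :
  capacity Cap -> (forall n, measurable (Z n)) -> (forall n, Cap (Z n) = 0%E) ->
  measurable N -> N `<=` \bigcup_n Z n -> Cap N = 0%E.
Proof.
move=> [Cap0 Cap_mono Cap_bigcup] mZ Z0 mN NZ; apply/eqP; rewrite eq_le Cap0// andbT.
by rewrite -(Cap_bigcup Z)//; apply: Cap_mono => //; exact: bigcupT_measurable.
Qed.

Section L2_semigroup.
Context d (E : measurableType d) (R : realType) (m : {measure set E -> \bar R}).
Variable T : R -> (E -> R) -> E -> R.
Hypothesis Tsg : L2_sc_semigroup m T.

Lemma L2_cst0 : L2 m (fun _ => 0).
Proof. exact: (Lfun_addr_closed m (lee1n 2)).1. Qed.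

Lemma L2_sc_semigroup_cst0 t : 0 <= t -> T t (fun _ => 0) = (fun _ => 0) %[ae m].
Proof.
move=> t0; case: Tsg => _ Tlin _ _ _.
have := Tlin t (-1) _ _ t0 L2_cst0 L2_cst0.
rewrite (_ : (fun _ => _) = (fun _ => 0)); last by apply/funext => x; rewrite mulr0 addr0.
by apply: filterS => x /[apply] ->; rewrite mulN1r addNr.
Qed.

Lemma L2_sc_semigroup_ae0 t f : 0 <= t -> L2 m f -> f = (fun _ => 0) %[ae m] ->
  T t f = (fun _ => 0) %[ae m].
Proof.
move=> t0 f2 f0; case: Tsg => [[_ Tae] _ _ _ _].
have Tf := Tae t _ _ t0 f2 L2_cst0 f0; have T0 := L2_sc_semigroup_cst0 t0.
by near=> x => _; rewrite (near Tf)// (near T0).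
Unshelve. all: by end_near.
Qed.

End L2_semigroup.

Section transition_null.
Context d (E : measurableType d) (R : realType).
Variable p : R -> E -> probability E R.
Local Open Scope ereal_scope.

Lemma ptf_indic (B : set E) t x : measurable B -> ptf p t \1_B x = p t x B.
Proof. by move=> mB; rewrite /ptf integral_indic// setIT. Qed.

Lemma represents_null_ae (m : {measure set E -> \bar R}) T (B : set E) t :
  L2_sc_semigroup m T -> represents m p T -> measurable B -> m B = 0 ->
  (0 <= t)%R -> (fun x => p t x B) = cst 0 %[ae m].
Proof.
move=> Tsg rep mB mB0 t0.
have B0 : (\1_B : E -> R) = (fun _ => 0%R) %[ae m].
  exists B; split => // y /= /not_implyP[_].
  by rewrite indicE; case: (boolP (y \in B)) => [/set_mem//|].
have L2B : L2 m \1_B by exact: Lfun_indic_null.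
have bB : exists M : R, forall x, (`|(\1_B : E -> R) x| <= M)%R.
  by exists 1%R => x; rewrite indicE; case: (_ \in _); rewrite ?normr1 ?normr0.
have ptfT := rep t \1_B t0 (measurable_indic mB) bB L2B.
have T0 := L2_sc_semigroup_ae0 Tsg t0 L2B B0.
by near=> x => _; rewrite -ptf_indic// (near ptfT)// /= (near T0).
Unshelve. all: by end_near.
Qed.

End transition_null.

Section occupation.
Context d (E : measurableType d) (R : realType).
Variable p : R -> E -> probability E R.
Hypothesis tf : transition_function p.
Variable B : set E.
Hypothesis mB : measurable B.
Local Open Scope ereal_scope.

(* [occupation q y] is [\int_0^oo p_s(y, B) ds] for every [q]; the delay [q] is
   built in so that [integral_delayed_hit] (Chapman-Kolmogorov) turns its
   [p_q(x, .)]-integral into [\int_q^oo p_t(x, B) dt] without translating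
   Lebesgue measure. *)
Definition delayed_hit (q : R) (tx : R * E) : \bar R :=
  if (q <= tx.1)%R then p (tx.1 - q) tx.2 B else 0.

Lemma measurable_delayed_hit q :
  measurable_fun (T := (measurableTypeR R * E)%type) setT (delayed_hit q).
Proof.
pose D0 : set (R * E) := [set tx | (0 <= tx.1)%R].
have mD0 : measurable D0.
  rewrite (_ : D0 = `[0%R, +oo[%classic `*` setT); first exact: measurableX.
  by apply/seteqP; split => -[t x]; rewrite /D0 /= in_itv /= andbT // => -[].
have -> : delayed_hit q =
    (fun tx => p tx.1 tx.2 B) \_ D0 \o (fun tx => (tx.1 - q, tx.2))%R.
  apply/funext => -[t x]; rewrite /delayed_hit /= patchE /=.
  suff -> : ((t - q)%R, x) \in D0 = (q <= t)%R by [].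
  by rewrite -subr_ge0; apply/idP/idP => [/set_mem|/mem_set].
apply: measurableT_comp.
  by apply/(measurable_restrictT _ mD0); case: tf => + _ _; exact.
apply/measurable_fun_pairP; split => /=; last exact: measurable_snd.
by apply: measurable_funB => //; exact: measurable_fst.
Qed.

Lemma delayed_hit_ge0 q tx : 0 <= delayed_hit q tx.
Proof. by rewrite /delayed_hit; case: ifP. Qed.

Lemma integral_delayed_hit q x t : (0 <= q)%R ->
  \int[p q x]_y delayed_hit q (t, y) = if (q <= t)%R then p t x B else 0.
Proof.
move=> q0; rewrite /delayed_hit /=; case: ifPn => [qt|_]; last exact: integral0.
by case: tf => _ _ CK; rewrite -[in RHS](subrKC q t) CK// subr_ge0.
Qed.

Definition occupation (q : R) (y : E) : \bar R :=
  \int[lebesgue_measure]_t delayed_hit q (t, y).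

Lemma measurable_occupation q : measurable_fun setT (occupation q).
Proof.
exact: (@measurable_fun_fubini_tonelli_G _ _ _ _ R lebesgue_measure _
  (measurable_delayed_hit q) (delayed_hit_ge0 q)).
Qed.

Lemma occupation_ge0 q y : 0 <= occupation q y.
Proof. by apply: integral_ge0 => t _; exact: delayed_hit_ge0. Qed.

Definition occupation_trunc (q : R) (y : E) : R := fine (mine (occupation q y) 1).

Lemma occupation_truncE q y : (occupation_trunc q y)%:E = mine (occupation q y) 1.
Proof.
rewrite /occupation_trunc fineK// ge0_fin_numE; last by rewrite le_min occupation_ge0 lee01.
by rewrite (le_lt_trans _ (ltry 1%R))// ge_min lexx orbT.
Qed.

Lemma measurable_occupation_trunc q : measurable_fun setT (occupation_trunc q).
Proof.
by apply: measurableT_comp => //; apply: measurable_mine => //; exact: measurable_occupation.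
Qed.

Lemma occupation_trunc_ge0 q y : (0 <= occupation_trunc q y)%R.
Proof. by rewrite -lee_fin occupation_truncE le_min occupation_ge0 lee01. Qed.

Lemma occupation_trunc_le1 q y : (occupation_trunc q y <= 1)%R.
Proof. by rewrite -lee_fin occupation_truncE ge_min lexx orbT. Qed.

Lemma occupation_trunc_eq0 q y : occupation q y = 0 -> occupation_trunc q y = 0%R.
Proof. by rewrite /occupation_trunc => ->; rewrite minEle lee01. Qed.

Lemma ptf_occupation_trunc_eq0 q x : (0 <= q)%R ->
  ptf p q (occupation_trunc q) x = 0 ->
  \forall t \ae @lebesgue_measure R, (q <= t)%R -> p t x B = 0.
Proof.
move=> q0 ptf0.
have trunc0 : (fun y => mine (occupation q y) 1) = cst 0 %[ae p q x].
  apply: ge0_integral_eq0_ae.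
  - by apply: measurable_mine => //; exact: measurable_occupation.
  - by move=> y; rewrite le_min occupation_ge0 lee01.
  - by rewrite -ptf0; apply: eq_integral => y _; rewrite occupation_truncE.
have occ0 : \int[p q x]_y occupation q y = 0.
  rewrite (ae_eq_integral (cst 0)) ?integral0//; first exact: measurable_occupation.
  apply: filterS trunc0 => y /[apply] /=.
  by rewrite minEle; case: ifP => // _ /eqP; rewrite onee_eq0.
have : (fun t => \int[p q x]_y delayed_hit q (t, y)) = cst 0 %[ae @lebesgue_measure R].
  apply: ge0_integral_eq0_ae.
  - exact: (@measurable_fun_fubini_tonelli_F _ _ _ _ R (p q x) _
      (measurable_delayed_hit q) (delayed_hit_ge0 q)).
  - by move=> t; apply: integral_ge0 => y _; exact: delayed_hit_ge0.
  - rewrite (@fubini_tonelli _ _ _ _ R lebesgue_measure (p q x) _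
      (measurable_delayed_hit q) (delayed_hit_ge0 q)).
    exact: occ0.
move=> ae0; near=> t => qt.
by have := integral_delayed_hit x t q0; rewrite qt (near ae0 t).
Unshelve. all: by end_near.
Qed.

Lemma ae_hit_eq0 x :
  (forall n, \forall t \ae @lebesgue_measure R, (n.+1%:R^-1 <= t)%R -> p t x B = 0) ->
  \forall t \ae @lebesgue_measure R, (0 <= t)%R -> p t x B = 0.
Proof.
move=> /ae_foralln hit0.
have ne0 : \forall t \ae @lebesgue_measure R, t != 0%R.
  exists [set 0%R]; split => //; first exact: lebesgue_measure_set1.
  by move=> t /= /negP; rewrite negbK => /eqP.
near=> t => t0.
have t_gt0 : (0 < t)%R by rewrite lt_neqAle eq_sym (near ne0 t).
have [n] := ltr_add_invr t_gt0; rewrite add0r => /ltW.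
exact: (near hit0 t).
Unshelve. all: by end_near.
Qed.

Lemma resolvent_indic_eq0 x :
  (\forall t \ae @lebesgue_measure R, (0 <= t)%R -> p t x B = 0) ->
  resolvent p \1_B x = 0.
Proof.
move=> hit0; rewrite /resolvent.
transitivity (\int[lebesgue_measure]_(t in `[0%R, +oo[%classic)
    ((expR (- t))%:E * delayed_hit 0 (t, x))).
  apply: eq_integral => t /set_mem; rewrite /= in_itv /= andbT => t0.
  by rewrite ptf_indic// /delayed_hit /= t0 subr0.
rewrite (ae_eq_integral (cst 0)) ?integral0//.
- apply: emeasurable_funM; first by apply/measurable_EFinP; exact: measurableT_comp.
  by apply: measurable_funTS; exact: measurable_fun_pair1 (measurable_delayed_hit 0).
- near=> t; rewrite /= in_itv /= andbT => t0.
  by rewrite /delayed_hit /= t0 subr0 (near hit0 t)// mule0.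
Unshelve. all: by end_near.
Qed.

End occupation.

Section occupation_null.
Context d (E : measurableType d) (R : realType).
Variable m : {measure set E -> \bar R}.
Hypothesis msf : sigma_finite setT m.
Variable p : R -> E -> probability E R.
Hypothesis tf : transition_function p.
Variable B : set E.
Hypothesis mB : measurable B.
Local Open Scope ereal_scope.

(* Fubini-Tonelli needs [m] as a [sigma_finite_measure]; the alias carries that
   structure. *)
Definition sigma_finite_copy : set E -> \bar R := m.
HB.instance Definition _ := Measure.on sigma_finite_copy.
HB.instance Definition _ := @Measure_isSigmaFinite.Build _ _ _ sigma_finite_copy msf.

Lemma occupation_ae0 q :
  (forall s, (0 <= s)%R -> (fun x => p s x B) = cst 0 %[ae m]) ->
  occupation p B q = cst 0 %[ae m].
Proof.
move=> hit0; apply: (@ge0_integral_eq0_ae _ _ _ sigma_finite_copy).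
- exact: measurable_occupation.
- exact: occupation_ge0.
rewrite /occupation -(@fubini_tonelli _ _ _ _ R lebesgue_measure sigma_finite_copy _
  (measurable_delayed_hit tf mB q) (delayed_hit_ge0 p B q)).
apply: integral0_eq => t _; rewrite (ae_eq_integral (cst 0)) ?integral0//.
  exact: measurable_fun_pair2 (measurable_delayed_hit tf mB q).
have [qt|tq] := boolP (q <= t)%R.
  have := hit0 (t - q)%R; rewrite subr_ge0 => /(_ qt) hit0tq.
  by near=> y => _; rewrite /delayed_hit /= qt (near hit0tq y).
by near=> y; rewrite /delayed_hit /= (negbTE tq).
Unshelve. all: by end_near.
Qed.

End occupation_null.

Theorem lemma2p19 (d : measure_display) (E : measurableType d) (R : realType)
    (m : {measure set E -> \bar R}) (p : R -> E -> probability E R)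
    (T : R -> (E -> R) -> E -> R) (Cap : set E -> \bar R) :
  sigma_finite setT m ->
  transition_function p ->
  L2_sc_semigroup m T ->
  represents m p T ->
  capacity Cap ->
  (forall f : E -> R, measurable_fun setT f ->
     (exists M : R, forall x, `|f x| <= M) ->
     f = (fun _ => 0) %[ae m] ->
     forall t : R, 0 < t ->
       exists Z : set E, [/\ measurable Z, Cap Z = 0%E &
         forall x, ~ Z x -> ptf p t f x = 0%E]) ->
  forall N : set E, measurable N -> m_thin m p N -> Cap N = 0%E.
Proof.
move=> msf tf Tsg rep capC hZ N mN [B [mB mB0 NB]].
have q_gt0 (n : nat) : 0 < n.+1%:R^-1 :> R by rewrite invr_gt0.
have hit0 s : 0 <= s -> (fun x => p s x B) = cst 0%E %[ae m].
  by move=> s0; apply: (represents_null_ae Tsg rep mB mB0 s0).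
have /choice[Z /all_and3[mZ Z0 ptfZ]] n : exists Z : set E,
    [/\ measurable Z, Cap Z = 0%E &
     forall x, ~ Z x -> ptf p n.+1%:R^-1 (occupation_trunc p B n.+1%:R^-1) x = 0%E].
  apply: hZ (measurable_occupation_trunc tf mB _) _ _ _ (q_gt0 n).
    exists 1 => y; rewrite ger0_norm ?occupation_trunc_ge0 //.
    exact: occupation_trunc_le1.
  apply: filterS (occupation_ae0 msf tf mB _ hit0) => y /[apply].
  exact: occupation_trunc_eq0.
apply: (capacity_sub_bigcup0 capC mZ Z0 mN) => x Nx.
apply: contrapT => xZ.
suff : resolvent p \1_B x = 0%E by move: (NB x Nx) => /[swap] /= ->; rewrite ltxx.
apply: (resolvent_indic_eq0 tf mB); apply: ae_hit_eq0 => n.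
apply: (ptf_occupation_trunc_eq0 tf mB (ltW (q_gt0 n))).
by apply: ptfZ => Znx; apply: xZ; exists n.
Qed.
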